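(* For all $n\ge 1$, $|F_n(321,14253)|=2^n-\binom{n}{2}-1$.
   Context: A permutation $\pi$ avoids a classical pattern $p\in S_k$ if no subsequence of $\pi$ of length $k$ is order-isomorphic to $p$. A Fishburn permutation is a permutation $\pi=\pi_1\cdots\pi_n$ of $[n]$ for which there are no indices $i<j$ with $\pi_j<\pi_i<\pi_{i+1}$ and $\pi_i=\pi_j+1$. $F_n(\sigma_1,\dots,\sigma_k)$ denotes the set of Fishburn permutations of length $n$ avoiding each of the classical patterns $\sigma_1,\dots,\sigma_k$. *)

From mathcomp Require Import all_boot all_order all_fingroup.
Set Implicit Arguments. Unset Strict Implicit. Unset Printing Implicit Defensive.

(* Permutations of [n] are represented as elements of {perm 'I_n}
   (values 0..n-1 instead of 1..n; this shift is order-preserving). *)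

Definition pval n (s : {perm 'I_n}) (i : 'I_n) : nat := val (s i).

Definition contains_pattern n (s : {perm 'I_n}) (p : seq nat) : bool :=
  [exists f : {ffun 'I_(size p) -> 'I_n},
     [forall a : 'I_(size p), forall b : 'I_(size p),
        ((a < b)%N ==> (f a < f b)%N) &&
        ((pval s (f a) < pval s (f b))%N == (nth 0 p a < nth 0 p b)%N)]].

Definition avoids n (s : {perm 'I_n}) (p : seq nat) : bool :=
  ~~ contains_pattern s p.

Definition fishburn n (s : {perm 'I_n}) : bool :=
  [forall i : 'I_n, forall j : 'I_n,
     ~~ [&& (i < j)%N, (i.+1 < n)%N,
            (pval s j < pval s i)%N,
            (pval s i < nth 0 [seq pval s k | k <- enum 'I_n] i.+1)%N
          & pval s i == (pval s j).+1]].

Definition Fset n (pats : seq (seq nat)) : {set {perm 'I_n}} :=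
  [set s : {perm 'I_n} | fishburn s && all (avoids s) pats].

From Pilot Require Import Defs.
From mathcomp Require Import all_boot all_order all_fingroup zify.
Set Implicit Arguments. Unset Strict Implicit. Unset Printing Implicit Defensive.

(* Write a permutation of [0, N) as its word p_0 ... p_{N-1} and split
   F_N = F_N(321, 14253) according to the last letter v = p_{N-1}.
   - If v >= N - 2, this letter is too large to take part in a 321, a 14253
     or a Fishburn violation, so deleting it is a bijection onto F_{N-1}
     (section AppendLargeLetter, lemma lift_perm_FF).
   - If v <= N - 3, the word is forced (section SmallLastLetter): it is
       (v+1) 0 1 ... (j-1) (v+2) (v+3) ... (N-1) j (j+1) ... v
     for some 1 <= j <= v, and all these words are good (forced_word_good);
     so exactly v permutations of F_N end with v (card_small_fiber).
   Hence |F_{m+2}| = 2 |F_{m+1}| + sum_{v < m} v = 2 |F_{m+1}| + C(m, 2),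
   and the formula follows by induction from |F_1| = 1.
   The patterns and the Fishburn condition are first translated into
   statements about words (predicate good, lemma FFP). *)

Notation FF n := (Fset n [:: [:: 3; 2; 1]; [:: 1; 4; 2; 5; 3]]).

(* The word p_0 ... p_{n-1} of s as a function on nat (0 past the end), in
   the form in which the Fishburn condition of Defs reads the letter p_{i+1}. *)
Definition word n (s : {perm 'I_n}) (i : nat) : nat :=
  nth 0 [seq Defs.pval s k | k <- enum 'I_n] i.

Lemma wordE n (s : {perm 'I_n}) (i : 'I_n) : word s i = val (s i).
Proof. by rewrite /word (nth_map i) ?size_enum_ord // nth_ord_enum. Qed.

Lemma word_lt n (s : {perm 'I_n}) i : i < n -> word s i < n.
Proof.
move=> lt_in; have -> : i = Ordinal lt_in by [].
by rewrite wordE ltn_ord.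
Qed.

Lemma word_inj n (s : {perm 'I_n}) i k :
  i < n -> k < n -> word s i = word s k -> i = k.
Proof.
move=> lt_in lt_kn; have -> : i = Ordinal lt_in by []; have -> : k = Ordinal lt_kn by [].
by rewrite !wordE => /val_inj/perm_inj ->.
Qed.

Lemma word_surj n (s : {perm 'I_n}) x : x < n -> exists2 i, i < n & word s i = x.
Proof. by move=> lt_xn; exists (s^-1 (Ordinal lt_xn))%g => //; rewrite wordE permKV. Qed.

Lemma containsP n (s : {perm 'I_n}) p :
  contains_pattern s p <->
  exists g : nat -> nat, [/\ forall a b, a < b -> b < size p -> g a < g b,
     forall a, a < size p -> g a < n &
     forall a b, a < size p -> b < size p ->
        (word s (g a) < word s (g b)) = (nth 0 p a < nth 0 p b)].
Proof.
split.
  move=> /existsP[f /forallP occ].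
  exists (fun a => if a < size p =P true is ReflectT lt_a then val (f (Ordinal lt_a)) else 0).
  split.
  - move=> a b lt_ab lt_b; have lt_a : a < size p by apply: ltn_trans lt_b.
    case: eqP => // lt_a'; case: eqP => // lt_b'.
    by have /andP[/implyP incr _] := forallP (occ (Ordinal lt_a')) (Ordinal lt_b'); apply: incr.
  - by move=> a lt_a; case: eqP => [?|/(_ lt_a)//]; apply: ltn_ord.
  - move=> a b lt_a lt_b; case: eqP => // lt_a'; case: eqP => // lt_b'.
    have /andP[_ /eqP iso] := forallP (occ (Ordinal lt_a')) (Ordinal lt_b').
    by rewrite !wordE.
move=> [g [incr bound iso]].
apply/existsP; exists [ffun a : 'I_(size p) => Ordinal (bound a (ltn_ord a))].
apply/forallP=> a; apply/forallP=> b; rewrite !ffunE /=.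
apply/andP; split; first by apply/implyP => lt_ab; apply: incr.
by rewrite /Defs.pval -!wordE; apply/eqP; apply: iso.
Qed.

Definition has321 (q : nat -> nat) n :=
  exists i j k, [/\ i < j, j < k, k < n, q k < q j & q j < q i].

Definition has14253 (q : nat -> nat) n :=
  exists i1 i2 i3 i4 i5, [/\ i1 < i2, i2 < i3, i3 < i4, i4 < i5 & i5 < n] /\
    [/\ q i1 < q i3, q i3 < q i5, q i5 < q i2 & q i2 < q i4].

Definition fishburn_word (q : nat -> nat) n :=
  forall i j, i < j -> j < n -> i.+1 < n ->
    ~ [/\ q j < q i, q i < q i.+1 & q i = (q j).+1].

Definition good (q : nat -> nat) n := [/\ ~ has321 q n, ~ has14253 q n & fishburn_word q n].

Lemma contains321P n (s : {perm 'I_n}) :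
  contains_pattern s [:: 3; 2; 1] <-> has321 (word s) n.
Proof.
rewrite containsP; split.
  move=> [g [incr bound iso]].
  by exists (g 0), (g 1), (g 2); split; rewrite ?iso //; apply: incr || apply: bound.
move=> [i [j [k [lt_ij lt_jk lt_kn dec_kj dec_ji]]]].
exists (nth 0 [:: i; j; k]); split.
- move=> a b; case: a => [|[|[|a]]]; case: b => [|[|[|b]]] //= _ _; lia.
- move=> a; case: a => [|[|[|a]]] //= _; lia.
- move=> a b; case: a => [|[|[|a]]]; case: b => [|[|[|b]]] //= _ _; lia.
Qed.

Lemma contains14253P n (s : {perm 'I_n}) :
  contains_pattern s [:: 1; 4; 2; 5; 3] <-> has14253 (word s) n.
Proof.
rewrite containsP; split.
  move=> [g [incr bound iso]].
  exists (g 0), (g 1), (g 2), (g 3), (g 4).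
  by split; split; rewrite ?iso //; apply: incr || apply: bound.
move=> [i1 [i2 [i3 [i4 [i5 [[lt12 lt23 lt34 lt45 lt5n] [v13 v35 v52 v24]]]]]]].
exists (nth 0 [:: i1; i2; i3; i4; i5]); split.
- move=> a b; case: a => [|[|[|[|[|a]]]]]; case: b => [|[|[|[|[|b]]]]] //= _ _; lia.
- move=> a; case: a => [|[|[|[|[|a]]]]] //= _; lia.
- move=> a b; case: a => [|[|[|[|[|a]]]]]; case: b => [|[|[|[|[|b]]]]] //= _ _; lia.
Qed.

Lemma fishburnP n (s : {perm 'I_n}) : fishburn s <-> fishburn_word (word s) n.
Proof.
split.
  move=> /forallP fish i j lt_ij lt_jn lt_i1n [dec_ji asc_i eq_ij].
  have lt_in : i < n by lia.
  have := forallP (fish (Ordinal lt_in)) (Ordinal lt_jn).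
  rewrite /Defs.pval -!wordE /= lt_ij lt_i1n /=.
  by rewrite dec_ji [_ < nth _ _ _]asc_i eq_ij eqxx.
move=> fish; apply/forallP => i; apply/forallP => j.
rewrite /Defs.pval -!wordE; apply/negP => /and5P[lt_ij lt_i1n dec_ji asc_i /eqP eq_ij].
exact: (fish i j lt_ij (ltn_ord j) lt_i1n).
Qed.

Lemma FFP n (s : {perm 'I_n}) : s \in FF n <-> good (word s) n.
Proof.
rewrite inE /= /avoids andbT; split.
  move=> /and3P[fish /negP no321 /negP no14253].
  by split; [move/contains321P | move/contains14253P | apply/fishburnP].
move=> [no321 no14253 fish]; apply/and3P; split.
- exact/fishburnP.
- by apply/negP => /contains321P.
- by apply/negP => /contains14253P.
Qed.

Section AppendLargeLetter.
Variables (n v : nat) (p q : nat -> nat).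
Hypothesis p_shift : forall i, i < n -> p i = if v <= q i then (q i).+1 else q i.
Hypothesis p_last : p n = v.
Hypothesis q_lt : forall i, i < n -> q i < n.
Hypothesis q_inj : forall i k, i < n -> k < n -> q i = q k -> i = k.
Hypothesis v_large : n.-1 <= v.
Hypothesis v_le : v <= n.

Lemma shift_ltE i k : i < n -> k < n -> (p i < p k) = (q i < q k).
Proof.
move=> lt_in lt_kn; rewrite !p_shift //.
by case: (leqP v (q i)); case: (leqP v (q k)) => ? ?; apply/idP/idP; lia.
Qed.

Lemma append_le i : i <= n -> p i <= n.
Proof.
rewrite leq_eqVlt => /orP[/eqP -> | lt_in]; first by rewrite p_last.
by have := q_lt lt_in; rewrite p_shift //; case: (leqP v (q i)); lia.
Qed.

Lemma good_restrict : good p n.+1 -> good q n.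
Proof.
move=> [no321 no14253 fish]; split.
- move=> [i [j [k [lt_ij lt_jk lt_kn dec_kj dec_ji]]]]; apply: no321.
  by exists i, j, k; split; try lia; rewrite shift_ltE //; lia.
- move=> [i1 [i2 [i3 [i4 [i5 [[lt12 lt23 lt34 lt45 lt5n] [v13 v35 v52 v24]]]]]]].
  apply: no14253; exists i1, i2, i3, i4, i5; split; split; try lia;
  by rewrite shift_ltE //; lia.
- move=> i j lt_ij lt_jn lt_i1n [dec_ji asc_i eq_ij].
  have q_i1 := q_lt lt_i1n.
  have p_i : p i = q i by rewrite p_shift; [case: leqP => //; lia | lia].
  have p_j : p j = q j by rewrite p_shift; [case: leqP => //; lia | lia].
  apply: (fish i j lt_ij); try lia.
  split; [by rewrite p_i p_j | by rewrite shift_ltE //; lia | by rewrite p_i p_j].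
Qed.

Lemma good_extend : good q n -> good p n.+1.
Proof.
move=> [no321 no14253 fish]; split.
- move=> [i [j [k [lt_ij lt_jk lt_kn dec_kj dec_ji]]]].
  have lt_kn' : k < n.
    rewrite ltn_neqAle -ltnS lt_kn andbT; apply/eqP => eq_kn; subst k.
    by move: dec_kj; rewrite p_last; have := @append_le i; lia.
  apply: no321; exists i, j, k; split => //; rewrite -shift_ltE //; lia.
- move=> [i1 [i2 [i3 [i4 [i5 [[lt12 lt23 lt34 lt45 lt5n] [v13 v35 v52 v24]]]]]]].
  have lt5n' : i5 < n.
    rewrite ltn_neqAle -ltnS lt5n andbT; apply/eqP => eq_5n; subst i5.
    by move: v35 v52; rewrite p_last; have := @append_le i4; lia.
  apply: no14253; exists i1, i2, i3, i4, i5; split; split; try lia;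
  by rewrite -shift_ltE //; lia.
- move=> i j lt_ij lt_jn lt_i1n [dec_ji asc_i eq_ij].
  have lt_jn' : j < n.
    rewrite ltn_neqAle -ltnS lt_jn andbT; apply/eqP => eq_jn; subst j.
    by move: dec_ji eq_ij; rewrite p_last; have := @append_le i.+1; lia.
  apply: (fish i j lt_ij lt_jn'); first lia.
  split; try by rewrite -shift_ltE //; lia.
  have neq_ij : q i != q j by apply/eqP => /q_inj; lia.
  by move: eq_ij neq_ij; rewrite !p_shift //; try lia;
     case: (leqP v (q i)); case: (leqP v (q j)) => ? ? ? /eqP; lia.
Qed.

End AppendLargeLetter.

Lemma lift_perm_inj n (i v : 'I_n.+1) : injective (lift_perm i v).
Proof.
move=> s t eq_st; apply/permP => k.
have := congr1 (fun u : 'S_n.+1 => u (lift i k)) eq_st; rewrite /= !lift_perm_lift.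
exact: lift_inj.
Qed.

Lemma lift_perm_surj n (s : 'S_n.+1) i : exists t : 'S_n, s = lift_perm i (s i) t.
Proof.
pose f (k : 'I_n) := if unlift (s i) (s (lift i k)) is Some k' then k' else k.
have lift_f k : lift (s i) (f k) = s (lift i k).
  rewrite /f; case: unliftP => [k' -> //|].
  by move/perm_inj => /eqP; rewrite eq_sym (negbTE (neq_lift _ _)).
have f_inj : injective f.
  by move=> k1 k2 eq_f; apply: (@lift_inj _ i); apply: (@perm_inj _ s); rewrite -!lift_f eq_f.
exists (perm f_inj); apply/permP => x.
case: (unliftP i x) => [k ->|->]; last by rewrite lift_perm_id.
by rewrite lift_perm_lift permE lift_f.
Qed.

Lemma card_fiber n (P : pred 'S_n.+1) (i v : 'I_n.+1) :
  #|[set s | P s & s i == v]| = #|[set t : 'S_n | P (lift_perm i v t)]|.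
Proof.
rewrite -(card_imset _ (@lift_perm_inj n i v)); apply: eq_card => s.
rewrite inE; apply/andP/imsetP.
  move=> [Ps /eqP s_i]; have [t eq_s] := lift_perm_surj s i.
  by exists t; rewrite ?inE -s_i -eq_s.
by move=> [t]; rewrite inE => Pt ->; rewrite lift_perm_id eqxx.
Qed.

Lemma word_lift n (t : 'S_n) (v : 'I_n.+1) i : i < n ->
  word (lift_perm ord_max v t) i = if v <= word t i then (word t i).+1 else word t i.
Proof.
move=> lt_in; have t_i : word t i = val (t (Ordinal lt_in)) := wordE t (Ordinal lt_in).
have lift_i : i = lift ord_max (Ordinal lt_in) by rewrite lift_max.
by rewrite t_i {1}lift_i wordE lift_perm_lift /= /bump; case: leqP; rewrite ?add1n ?add0n.
Qed.

Lemma word_lift_last n (t : 'S_n) (v : 'I_n.+1) : word (lift_perm ord_max v t) n = v.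
Proof. by have := wordE (lift_perm ord_max v t) ord_max; rewrite lift_perm_id. Qed.

Lemma lift_perm_FF n (t : 'S_n) (v : 'I_n.+1) : n.-1 <= v ->
  (lift_perm ord_max v t \in FF n.+1) = (t \in FF n).
Proof.
move=> v_large; have v_le : v <= n by rewrite -ltnS ltn_ord.
have shift i := @word_lift n t v i; have last := word_lift_last t v.
have t_lt := @word_lt n t; have t_inj := @word_inj n t.
apply/idP/idP => /FFP good_s; apply/FFP.
- exact: (good_restrict shift last t_lt v_large v_le).
- exact: (good_extend shift last t_lt t_inj v_large v_le).
Qed.

Lemma count_interval lo hi N :
  count (fun x => lo <= x < hi) (iota 0 N) = minn hi N - lo.
Proof.
elim: N => [|N IHN]; first by rewrite /= minn0.
rewrite -addn1 iotaD count_cat IHN /= addn0 add0n.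
by case: (leqP lo N); case: (ltnP N hi) => /=; lia.
Qed.

Lemma card_interval N lo hi : hi <= N -> #|[set x : 'I_N | lo <= x < hi]| = hi - lo.
Proof.
move=> le_hi; rewrite cardsE cardE /enum_mem size_filter.
have -> : count (mem [pred x : 'I_N | lo <= x < hi]) (Finite.enum 'I_N)
        = count (fun x => lo <= x < hi) (map val (enum 'I_N)).
  by rewrite count_map enumT.
by rewrite val_enum_ord count_interval; lia.
Qed.

Lemma card_perm_preim N (s : 'S_N) (A : {set 'I_N}) : #|[set i | s i \in A]| = #|A|.
Proof.
rewrite -(card_preimset A (@perm_inj _ s)); apply: eq_card => i.
by rewrite !inE.
Qed.

Lemma perm_rank N (s : 'S_N) i : val (s i) = #|[set k | s k < s i]|.
Proof.
have -> : #|[set k | s k < s i]| = #|[set k | s k \in [set x : 'I_N | 0 <= x < s i]]|.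
  by apply: eq_card => k; rewrite !inE.
by rewrite card_perm_preim card_interval ?subn0 // ltnW.
Qed.

Lemma perm_eq_of_order N (s t : 'S_N) :
  (forall i k, (s i < s k) = (t i < t k)) -> s = t.
Proof.
move=> same_order; apply/permP => i; apply: val_inj.
by rewrite /= (perm_rank s) (perm_rank t); apply: eq_card => k; rewrite !inE same_order.
Qed.

(* The word (v+1) 0 1 ... (j-1) (v+2) (v+3) ... (N-1) j (j+1) ... v. *)
Definition forced_word (N v j i : nat) : nat :=
  if i == 0 then v.+1
  else if i <= j then i.-1
  else if i <= j + (N - v.+2) then i - j + v + 1
  else i - (N - v.+1).

Section ForcedWord.
Variables (N v j : nat).
Hypotheses (j_pos : 0 < j) (j_le_v : j <= v) (v_small : v.+2 < N).

Lemma forced_word_lt i : i < N -> forced_word N v j i < N.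
Proof. rewrite /forced_word => lt_iN; do ![case: ifP => ?; try lia]. Qed.

Lemma forced_word_inj i k :
  i < N -> k < N -> forced_word N v j i = forced_word N v j k -> i = k.
Proof. rewrite /forced_word => lt_iN lt_kN; do ![case: ifP => ?; try lia]. Qed.

Lemma forced_word_last : forced_word N v j N.-1 = v.
Proof. rewrite /forced_word; do ![case: ifP => ?; try lia]. Qed.

Lemma forced_word_good : good (forced_word N v j) N.
Proof.
split.
- move=> [i [i' [k [lt_ii' lt_i'k lt_kN dec_ki' dec_i'i]]]]; move: dec_ki' dec_i'i.
  rewrite /forced_word; do ![case: ifP => ?; try lia].
- move=> [i1 [i2 [i3 [i4 [i5 [[lt12 lt23 lt34 lt45 lt5N] [v13 v35 v52 v24]]]]]]].
  move: v13 v35 v52 v24; rewrite /forced_word; do ![case: ifP => ?; try lia].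
- move=> i k lt_ik lt_kN lt_i1N [dec_ki asc_i eq_ik]; move: dec_ki asc_i eq_ik.
  rewrite /forced_word; do ![case: ifP => ?; try lia].
Qed.

End ForcedWord.

(* The permutation with word forced_word N v j (the identity for parameters
   outside the range where forced_word is a bijection). *)
Definition forced_ffun N v j : {ffun 'I_N -> 'I_N} :=
  [ffun i : 'I_N => insubd i (forced_word N v j i)].

Definition forced_perm N v j : 'S_N :=
  if injectiveP (forced_ffun N v j) is ReflectT f_inj then perm f_inj else 1%g.

Lemma word_forced_perm N v j i : 0 < j -> j <= v -> v.+2 < N -> i < N ->
  word (forced_perm N v j) i = forced_word N v j i.
Proof.
move=> j_pos j_le_v v_small lt_iN.
have ffunE' (k : 'I_N) : val (forced_ffun N v j k) = forced_word N v j k.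
  by rewrite ffunE val_insubd forced_word_lt.
have -> : i = Ordinal lt_iN by [].
rewrite wordE /forced_perm; case: injectiveP => [f_inj|not_inj].
  by rewrite permE ffunE'.
exfalso; apply: not_inj => k1 k2 eq_f; apply: val_inj.
by apply: (forced_word_inj j_pos j_le_v v_small (ltn_ord k1) (ltn_ord k2)); rewrite -!ffunE' eq_f.
Qed.

(* Structure of a good permutation s of [0, N) whose last letter v is at most
   N - 3: its word is forced_word N v j, where j + 1 is the position of v + 2. *)
Section SmallLastLetter.
Variables (N v : nat) (s : 'S_N).
Hypothesis s_good : good (word s) N.
Hypothesis s_last : word s N.-1 = v.
Hypothesis v_small : v.+2 < N.
Local Notation p := (word s).

Lemma word_neq i k : i < N -> k < N -> i != k -> p i != p k.
Proof. by move=> lt_iN lt_kN; apply: contra => /eqP /word_inj ->. Qed.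

Lemma lt_last k : k < N -> p k != v -> k < N.-1.
Proof.
move=> lt_kN; apply: contra_neqT; rewrite -ltnS (ltn_predK lt_kN) ltnNge negbK => le_k.
by rewrite -s_last; congr word; lia.
Qed.

(* Letters above v increase: two of them in decreasing order would start a 321
   ending with the last letter v. *)
Lemma large_increasing i k : i < k -> k < N -> v < p i -> v < p k -> p i < p k.
Proof.
move=> lt_ik lt_kN v_i v_k.
have lt_k_last : k < N.-1 by apply: lt_last => //; rewrite neq_ltn v_k orbT.
have : p i != p k by apply: word_neq; lia.
rewrite neq_ltn => /orP[// | dec_ki].
by case: s_good => no321 _ _; case: no321; exists i, k, N.-1; rewrite s_last; split; lia.
Qed.

(* The letter v + 1 is followed by a letter below v: a letter v + 1 < x would
   give a Fishburn violation with the last letter, and x = v is excluded since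
   v + 2 must come before v + 1. *)
Lemma after_vS r : r < N -> p r = v.+1 -> r.+1 < N /\ p r.+1 < v.
Proof.
move=> lt_rN p_r; have lt_r_last : r < N.-1 by apply: lt_last; rewrite // p_r; lia.
have lt_r1N : r.+1 < N by lia.
split => //; case: s_good => _ _ fish.
have le_r1 : p r.+1 <= v.+1.
  rewrite leqNgt; apply/negP => gt_r1.
  by apply: (fish r N.-1 lt_r_last); rewrite ?s_last ?p_r //; lia.
have neq_vS : p r.+1 != v.+1 by rewrite -p_r; apply: word_neq => //; lia.
have neq_v : p r.+1 != v.
  apply/eqP => p_r1; have last_r1 : r.+1 = N.-1.
    by apply: (word_inj (s := s)); rewrite ?s_last; lia.
  have [a lt_aN p_a] : exists2 a, a < N & p a = v.+2 by apply: word_surj.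
  have lt_ar : a < r.
    have : a < N.-1 by apply: lt_last; rewrite // p_a; lia.
    have : a != r by apply/eqP => eq_ar; move: p_a; rewrite eq_ar p_r; lia.
    lia.
  by have := large_increasing lt_ar lt_rN; rewrite p_a p_r; lia.
lia.
Qed.

(* Letters before v + 1 are below v (those above v increase, by
   large_increasing). *)
Lemma before_vS r i : r < N -> p r = v.+1 -> i < r -> p i < v.
Proof.
move=> lt_rN p_r lt_ir; have lt_r_last : r < N.-1 by apply: lt_last; rewrite // p_r; lia.
case: (leqP (p i) v) => [le_i | gt_i].
  by rewrite ltn_neqAle le_i andbT -s_last; apply: word_neq; lia.
by have := large_increasing lt_ir lt_rN gt_i; rewrite p_r; lia.
Qed.

(* The letter v + 1 comes first.  Otherwise let m be the least letter before it,
   and z < v the letter after it: if m < z, then m, v+1, z, N-1, v is a 14253;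
   if m > z, then m - 1 occurs after m, a Fishburn violation. *)
Lemma vS_first r : r < N -> p r = v.+1 -> r = 0.
Proof.
move=> lt_rN p_r; have [lt_r1N z_small] := after_vS lt_rN p_r.
case: (posnP r) => // r_pos; exfalso.
pose before x := [exists i : 'I_N, (i < r) && (p i == x)].
have ex_before : exists x, before x.
  by exists (p 0); apply/existsP; exists (Ordinal (ltn_trans r_pos lt_rN)); rewrite /= r_pos eqxx.
case: (ex_minnP ex_before) => m /existsP[[i0 lt_i0N] /= /andP[lt_i0r /eqP p_i0]] m_min.
have m_small := before_vS lt_rN p_r lt_i0r; rewrite p_i0 in m_small.
have [b lt_bN p_b] : exists2 b, b < N & p b = N.-1 by apply: word_surj; lia.
have lt_b_last : b < N.-1 by apply: lt_last; rewrite // p_b; lia.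
have lt_r1b : r.+1 < b.
  have lt_rb : r < b.
    case: (ltngtP r b) => // [lt_br | eq_rb]; last by move: p_b; rewrite -eq_rb p_r; lia.
    by have := large_increasing lt_br lt_rN; rewrite p_r p_b; lia.
  rewrite ltn_neqAle lt_rb andbT; apply/eqP => eq_r1b; move: p_b; rewrite -eq_r1b; lia.
case: s_good => _ no14253 fish.
case: (ltngtP m (p r.+1)) => [lt_mz | gt_mz | eq_mz].
- by apply: no14253; exists i0, r, r.+1, b, N.-1; split; split; lia.
- have [c lt_cN p_c] : exists2 c, c < N & p c = m.-1 by apply: word_surj; lia.
  have lt_i0c : i0 < c.
    case: (ltnP c r) => [lt_cr | le_rc]; last by lia.
    have : before m.-1 by apply/existsP; exists (Ordinal lt_cN); rewrite /= lt_cr p_c eqxx.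
    by move/m_min; lia.
  apply: (fish i0 c lt_i0c lt_cN); first lia.
  split; try lia.
  case: (ltngtP i0.+1 r) => [lt_i1r | | eq_i1r]; [ | lia | by rewrite eq_i1r p_r p_i0; lia].
  have : before (p i0.+1) by apply/existsP; exists (Ordinal (ltn_trans lt_i1r lt_rN)); rewrite /= lt_i1r eqxx.
  move/m_min => le_m; rewrite ltn_neqAle p_i0 le_m andbT -p_i0.
  by apply: word_neq; lia.
- have eq_i0r1 : i0 = r.+1 by apply: (word_inj (s := s)); lia.
  lia.
Qed.

Lemma first_letter : p 0 = v.+1.
Proof.
have [r lt_rN p_r] : exists2 r, r < N & p r = v.+1 by apply: word_surj; lia.
by rewrite -(vS_first lt_rN p_r).
Qed.

(* After the first letter v + 1, the letters up to v increase: otherwise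
   v + 1 would start a 321. *)
Lemma small_increasing i k : 0 < i -> i < k -> k < N -> p i <= v -> p k <= v -> p i < p k.
Proof.
move=> i_pos lt_ik lt_kN le_i le_k.
have : p i != p k by apply: word_neq; lia.
rewrite neq_ltn => /orP[// | dec_ki].
by case: s_good => no321 _ _; case: no321; exists 0, i, k; rewrite first_letter; split; lia.
Qed.

Lemma second_letter : p 1 = 0.
Proof.
have [_ p_1] := after_vS (r := 0) ltac:(lia) first_letter.
have [c lt_cN p_c] : exists2 c, c < N & p c = 0 by apply: word_surj; lia.
case: (ltngtP c 1) => [lt_c1 | gt_c1 | eq_c1].
- have eq_c0 : c = 0 by lia.
  by move: p_c; rewrite eq_c0 first_letter.
- by have := small_increasing (isT : 0 < 1) gt_c1 lt_cN; lia.
- by rewrite -eq_c1.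
Qed.

Variables (a b : nat).
Hypotheses (lt_aN : a < N) (p_a : p a = v.+2) (lt_bN : b < N) (p_b : p b = N.-1).

Lemma a_gt1 : 1 < a.
Proof.
case: (ltngtP a 1) => [lt_a1 | // | eq_a1]; last by move: p_a; rewrite eq_a1 second_letter.
have eq_a0 : a = 0 by lia.
by move: p_a; rewrite eq_a0 first_letter; lia.
Qed.

Lemma b_lt_last : b < N.-1.
Proof. by apply: lt_last; rewrite // p_b; lia. Qed.

(* The letters above v + 1 form the increasing block from v + 2 to N - 1
   between positions a and b: a letter x <= v inside the block would make
   0, v+2, x, N-1, v a 14253. *)
Lemma large_block i : i < N -> (v.+2 <= p i) = (a <= i <= b).
Proof.
move=> lt_iN; have a_big := a_gt1; have b_small := b_lt_last.
apply/idP/idP => [large_i | /andP[le_ai le_ib]].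
  apply/andP; split; rewrite leqNgt; apply/negP.
    by move=> lt_ia; have := large_increasing lt_ia lt_aN; lia.
  by move=> lt_bi; have := large_increasing lt_bi lt_iN; have := word_lt s lt_iN; lia.
case: (ltngtP a i) => [lt_ai | | <-]; [ | lia | by rewrite p_a].
case: (ltngtP i b) => [lt_ib | | ->]; [ | lia | by rewrite p_b; lia].
rewrite leqNgt; apply/negP => small_i.
have neq_vS : p i != v.+1 by rewrite -first_letter; apply: word_neq; lia.
have neq_v : p i != v by rewrite -s_last; apply: word_neq; lia.
have neq_0 : p i != 0 by rewrite -second_letter; apply: word_neq; lia.
have neq_ab : p a != p b by apply: word_neq; lia.
case: s_good => _ no14253 _; apply: no14253.
by exists 1, a, i, b, N.-1; rewrite second_letter p_a p_b s_last; split; split; lia.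
Qed.

Lemma block_length : b.+1 = a + (N - v.+2).
Proof.
have le_ab : a <= b by have := large_block lt_aN; rewrite p_a leqnn => /esym /andP[].
have count_values : #|[set i : 'I_N | v.+2 <= s i]| = N - v.+2.
  rewrite -(@card_interval N v.+2 N (leqnn N)) -(card_perm_preim s [set x : 'I_N | v.+2 <= x < N]).
  by apply: eq_card => i; rewrite !inE ltn_ord andbT.
have count_positions : #|[set i : 'I_N | v.+2 <= s i]| = b.+1 - a.
  rewrite -(@card_interval N a b.+1) //; apply: eq_card => i.
  by rewrite !inE -wordE large_block.
lia.
Qed.

Lemma letter_cases i : i < N ->
  [\/ i = 0 /\ p i = v.+1,
      [/\ 0 < i, (i < a) || (b < i) & p i <= v]
    | [/\ a <= i, i <= b & v.+2 <= p i]].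
Proof.
move=> lt_iN; have block_i := large_block lt_iN.
case: (posnP i) => [-> | i_pos]; first by apply: Or31; rewrite first_letter.
case: (leqP v.+2 (p i)) => large_i.
  by apply: Or33; move: block_i; rewrite large_i => /esym /andP[].
apply: Or32; split => //.
  by move: block_i; rewrite leqNgt large_i /= => /esym /negbT; rewrite negb_and -!ltnNge.
have : p i != v.+1 by rewrite -first_letter; apply: word_neq; lia.
lia.
Qed.

Lemma forced_order i k : i < N -> k < N ->
  forced_word N v a.-1 i < forced_word N v a.-1 k -> p i < p k.
Proof.
move=> lt_iN lt_kN.
have a_big := a_gt1; have b_small := b_lt_last; have len := block_length.
case: (letter_cases lt_iN) => [[eq_i p_i] | [i_pos out_i p_i] | [le_ai le_ib p_i]];
case: (letter_cases lt_kN) => [[eq_k p_k] | [k_pos out_k p_k] | [le_ak le_kb p_k]];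
rewrite /forced_word; case: (ltngtP i k) => cmp_ik;
do ![case: ifP => ?; try lia];
try (move=> _; apply: small_increasing; lia); try (move=> _; apply: large_increasing; lia).
Qed.

Lemma small_fiber_forced : s = forced_perm N v a.-1.
Proof.
have a_big := a_gt1; have v_ge : a.-1 <= v by have := block_length; have := b_lt_last; lia.
apply: perm_eq_of_order => i k; rewrite -!wordE !word_forced_perm //; try lia.
apply/idP/idP => [lt_ik | ]; last exact: forced_order.
case: (ltngtP (forced_word N v a.-1 i) (forced_word N v a.-1 k)) => // [gt_ik | eq_ik].
  by have := forced_order (ltn_ord k) (ltn_ord i) gt_ik; lia.
have eq_i_k : nat_of_ord i = k.
  by apply: (forced_word_inj (j := a.-1) (v := v) (N := N)) => //; lia.
by rewrite eq_i_k ltnn in lt_ik.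
Qed.

End SmallLastLetter.

Lemma good_ext p q N : (forall i, i < N -> p i = q i) -> good q N -> good p N.
Proof.
move=> eq_pq [no321 no14253 fish]; split.
- move=> [i [j [k [lt_ij lt_jk lt_kN dec_kj dec_ji]]]]; apply: no321; exists i, j, k.
  by rewrite -!eq_pq //; try lia; split.
- move=> [i1 [i2 [i3 [i4 [i5 [[lt12 lt23 lt34 lt45 lt5N] [v13 v35 v52 v24]]]]]]].
  apply: no14253; exists i1, i2, i3, i4, i5; rewrite -!eq_pq //; try lia; split; split => //.
- move=> i j lt_ij lt_jN lt_i1N; rewrite !eq_pq //; try lia; exact: fish.
Qed.

Lemma forced_perm_FF N v j : 0 < j -> j <= v -> v.+2 < N ->
  forced_perm N v j \in FF N /\ word (forced_perm N v j) N.-1 = v.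
Proof.
move=> j_pos j_le_v v_small; split; last by rewrite word_forced_perm ?forced_word_last //; lia.
apply/FFP; apply: (@good_ext _ (forced_word N v j)); last exact: forced_word_good.
by move=> i lt_iN; rewrite word_forced_perm.
Qed.

(* The parameter j is read off the word as the letter at position j + 1. *)
Lemma forced_perm_inj N v j1 j2 : 0 < j1 <= v -> 0 < j2 <= v -> v.+2 < N ->
  forced_perm N v j1 = forced_perm N v j2 -> j1 = j2.
Proof.
move=> /andP[j1_pos le_j1] /andP[j2_pos le_j2] v_small eq_perm.
have := congr1 (fun s => word s j1.+1) eq_perm => /=.
rewrite !word_forced_perm; try lia.
by rewrite /forced_word; do ![case: ifP => ?; try lia].
Qed.

Lemma card_small_fiber N v : v.+2 < N ->
  #|[set s : 'S_N | (s \in FF N) && (word s N.-1 == v)]| = v.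
Proof.
move=> v_small; pose J := [set j : 'I_N | 1 <= j < v.+1].
have card_J : #|J| = v by rewrite card_interval; lia.
have J_inj : {in J &, injective (fun j : 'I_N => forced_perm N v j)}.
  move=> j1 j2; rewrite !inE => J_j1 J_j2 eq_perm; apply: val_inj.
  exact: (forced_perm_inj J_j1 J_j2 v_small eq_perm).
rewrite -[RHS]card_J -(card_in_imset J_inj); apply: eq_card => s; rewrite inE.
apply/idP/imsetP => [/andP[/FFP s_good /eqP s_last] | [j]].
  have [a lt_aN p_a] : exists2 a, a < N & word s a = v.+2 by apply: word_surj.
  have [b lt_bN p_b] : exists2 b, b < N & word s b = N.-1 by apply: word_surj; lia.
  have a_big := a_gt1 s_good s_last v_small lt_aN p_a lt_bN p_b.
  have len := block_length s_good s_last v_small lt_aN p_a lt_bN p_b.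
  have b_small := b_lt_last s_last v_small lt_aN p_a lt_bN p_b.
  exists (Ordinal (leq_ltn_trans (leq_pred a) lt_aN)); first by rewrite inE /=; lia.
  exact: (small_fiber_forced s_good s_last v_small lt_aN p_a lt_bN p_b).
rewrite inE ltnS => /andP[j_pos le_jv] ->.
by have [-> ->] := forced_perm_FF j_pos le_jv v_small; rewrite eqxx.
Qed.

Lemma card_split_last n (A : {set 'S_n.+1}) :
  #|A| = \sum_(v < n.+1) #|[set s | (s \in A) & (s ord_max == v)]|.
Proof.
rewrite -sum1_card (partition_big (fun s : 'S_n.+1 => s ord_max) predT) //=.
by apply: eq_bigr => v _; rewrite -sum1_card; apply: eq_bigl => s; rewrite !inE.
Qed.

Lemma card_large_fiber n (v : 'I_n.+1) : n.-1 <= v ->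
  #|[set s : 'S_n.+1 | (s \in FF n.+1) & (s ord_max == v)]| = #|FF n|.
Proof.
move=> v_large; rewrite (card_fiber (mem (FF n.+1))).
by apply: eq_card => t; rewrite in_set -(lift_perm_FF t v_large).
Qed.

Lemma FF_recurrence m : #|FF m.+2| = 2 * #|FF m.+1| + 'C(m, 2).
Proof.
rewrite card_split_last !big_ord_recr /= !card_large_fiber /=; try lia.
rewrite -bin2_sum big_mkord.
have -> : \sum_(v < m) #|[set s : 'S_m.+2 | (s \in FF m.+2) &
              (s ord_max == widen_ord (leqnSn m.+1) (widen_ord (leqnSn m) v))]|
        = \sum_(v < m) v.
  apply: eq_bigr => v _; rewrite -(@card_small_fiber m.+2 v) ?ltnS ?ltn_ord //.
  apply: eq_card => s; rewrite !inE.
  by have -> : word s m.+1 = val (s ord_max) := wordE s ord_max.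
lia.
Qed.

Lemma card_FF1 : #|FF 1| = 1.
Proof.
rewrite -[RHS](card_Sn 1); apply: eq_card => s.
have s_good : good (word s) 1.
  by split; [move=> [i [j [k []]]] | move=> [i1 [i2 [i3 [i4 [i5 [[]]]]]]] | move=> i j]; lia.
by move/FFP: s_good => ->.
Qed.

Theorem mainTheorem16 (n : nat) :
  (1 <= n)%N ->
  #|Fset n [:: [:: 3; 2; 1]; [:: 1; 4; 2; 5; 3]]| + 'C(n, 2) + 1 = 2 ^ n.
Proof.
case: n => [//|m] _; elim: m => [|m IHm]; first by rewrite card_FF1.
have binS2 k : 'C(k.+1, 2) = 'C(k, 2) + k by rewrite binS bin1.
by rewrite FF_recurrence binS2 expnS -IHm binS2; lia.
Qed.
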